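(* Let $(X,\phi)$ be a flow on a compact metric space $(X,d)$. Then $$\overline{\mathrm{mdim}}_M(\phi,X,d)=\overline{\mathrm{mdim}}^B(\phi,X,d).$$
   Context: A flow: $\phi:X\times\mathbb{R}\to X$ continuous, $\phi_t(x)=\phi(x,t)$, $\phi_0=\mathrm{id}$, $\phi_{t+s}=\phi_t\circ\phi_s$. $d_t(x,y)=\max_{s\in[0,t]}d(\phi_sx,\phi_sy)$, $B_t(x,\epsilon,\phi)=\{y:d_t(x,y)<\epsilon\}$. $r_t(\phi,X,d,\epsilon)$ is the minimal cardinality of $E\subset X$ with every $x\in X$ satisfying $d_t(x,y)<\epsilon$ for some $y\in E$; $r(\phi,X,d,\epsilon)=\limsup_{t\to\infty}\frac1t\log r_t(\phi,X,d,\epsilon)$; $\overline{\mathrm{mdim}}_M(\phi,X,d)=\limsup_{\epsilon\to0}\frac{r(\phi,X,d,\epsilon)}{\log(1/\epsilon)}$. Bowen upper metric mean dimension of $Z\subset X$: for $\lambda\in\mathbb{R}$, $N\in\mathbb{N}$, $\epsilon>0$, $M(\phi,d,Z,\lambda,N,\epsilon)=\inf\sum_{i\in I}e^{-n_i\lambda}$ over finite or countable families $\{B_{n_i}(x_i,\epsilon,\phi)\}_{i\in I}$ covering $Z$ with $n_i\ge N$; $M(\phi,d,Z,\lambda,\epsilon)=\lim_{N\to\infty}M(\phi,d,Z,\lambda,N,\epsilon)$; $M(\phi,d,Z,\epsilon)=\inf\{\lambda:M(\phi,d,Z,\lambda,\epsilon)=0\}$; $\overline{\mathrm{mdim}}^B(\phi,Z,d)=\limsup_{\epsilon\to0}\frac{M(\phi,d,Z,\epsilon)}{\log(1/\epsilon)}$.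 *)

From HB Require Import structures.
From mathcomp Require Import all_boot all_order all_algebra finmap.
From mathcomp Require Import all_classical all_reals all_analysis.

Set Implicit Arguments.
Unset Strict Implicit.
Unset Printing Implicit Defensive.

Import Order.TTheory GRing.Theory Num.Theory.
Import numFieldNormedType.Exports.
Local Open Scope classical_set_scope.
Local Open Scope ring_scope.

Section FlowDefs.
Context {R : realType} {X : metricType R}.

(* d is the metric of X; phi x t = phi_t(x). *)
Definition d : X -> X -> R := @mdist R X.

Definition is_flow (phi : X -> R -> X) : Prop :=
  [/\ continuous (fun p : X * R => phi p.1 p.2),
      (forall x, phi x 0 = x) &
      (forall x t s, phi x (t + s) = phi (phi x s) t)].

Definition dt (phi : X -> R -> X) (t : R) (x y : X) : R :=
  sup [set d (phi x s) (phi y s) | s in `[0, t]].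

Definition bowen_ball (phi : X -> R -> X) (t : R) (x : X) (eps : R) : set X :=
  [set y | dt phi t x y < eps].

Definition spanning (phi : X -> R -> X) (t eps : R) (E : {fset X}) : Prop :=
  forall x : X, exists2 y, y \in E & dt phi t x y < eps.

(* r_t(phi, X, d, eps): minimal cardinality of a spanning set (+oo if none is finite) *)
Definition r_t (phi : X -> R -> X) (t eps : R) : \bar R :=
  ereal_inf [set ((#|` E|)%:R)%:E | E in [set E | spanning phi t eps E]].

Definition elog (x : \bar R) : \bar R :=
  match x with
  | r%:E => if (0 < r)%R then (ln r)%:E else -oo
  | +oo => +oo
  | -oo => -oo
  end%E.

Definition r_rate (phi : X -> R -> X) (eps : R) : \bar R :=
  limf_esup (fun t : R => ((t^-1)%:E * elog (r_t phi t eps))%E) (pinfty_nbhs R).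

Definition mdimM (phi : X -> R -> X) : \bar R :=
  limf_esup (fun eps : R => (r_rate phi eps * ((ln (eps^-1))^-1)%:E)%E) (0^'+).

(* Bowen upper metric mean dimension.
   A finite or countable family {B_{n_i}(x_i, eps)}_{i in I} is encoded as
   f : nat -> option (X * nat), the family being indexed by {i | f i <> None}. *)
Definition bowen_cover (phi : X -> R -> X) (Z : set X) (N : nat) (eps : R)
    (f : nat -> option (X * nat)) : Prop :=
  (forall i x n, f i = Some (x, n) -> (N <= n)%N) /\
  (Z `<=` \bigcup_(i in [set: nat])
      (match f i with
       | Some (x, n) => bowen_ball phi n%:R x eps
       | None => set0
       end)).

Definition bowen_weight (lam : R) (f : nat -> option (X * nat)) (i : nat) : \bar R :=
  match f i with
  | Some (_, n) => (expR (- (n%:R * lam)))%:E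
  | None => 0%E
  end.

Definition M_N (phi : X -> R -> X) (Z : set X) (lam : R) (N : nat) (eps : R) : \bar R :=
  ereal_inf [set (\sum_(i <oo) bowen_weight lam f i)%E
            | f in [set f | bowen_cover phi Z N eps f]].

Definition M_lam (phi : X -> R -> X) (Z : set X) (lam : R) (eps : R) : \bar R :=
  limn (fun N => M_N phi Z lam N eps).

Definition M_crit (phi : X -> R -> X) (Z : set X) (eps : R) : \bar R :=
  ereal_inf [set lam%:E | lam in [set lam | M_lam phi Z lam eps = 0%E]].

Definition mdimB (phi : X -> R -> X) (Z : set X) : \bar R :=
  limf_esup (fun eps : R => (M_crit phi Z eps * ((ln (eps^-1))^-1)%:E)%E) (0^'+).

End FlowDefs.

From HB Require Import structures.
From mathcomp Require Import all_boot all_order all_algebra finmap.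
From mathcomp Require Import all_classical all_reals all_analysis.
From mathcomp Require Import lra zify.

Set Implicit Arguments.
Unset Strict Implicit.
Unset Printing Implicit Defensive.

Import Order.TTheory GRing.Theory Num.Theory.
Import numFieldNormedType.Exports.
Local Open Scope classical_set_scope.
Local Open Scope ring_scope.

(* Both dimensions are lim sups, as eps -> 0, of an exponential growth rate at
   scale eps divided by ln (1/eps), so it suffices to compare the spanning rate
   r(eps) with the Bowen critical value M(eps) up to a change of scale.
   A (t, eps)-spanning set E is a cover of X by Bowen balls of the single length
   t, of weight #E e^(-lam t); hence M(eps) <= r(eps).
   Conversely, if M(lam, eps) = 0 there is a cover by Bowen balls B_(n_i)(x_i, eps)
   with sum_i e^(-lam n_i) < 1, which compactness makes finite since Bowen balls
   are open.  Following the orbit of x, record the index of a ball containing the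
   current point, flow for the length of that ball, and repeat until time T.
   Points with the same itinerary stay 2 eps-close up to time T, and the weight
   bound limits the number of itineraries to C e^(lam T); hence
   r(3 eps) <= M(eps).  Since ln (3/eps) / ln (1/eps) -> 1, the two lim sups
   coincide. *)

Section ereal_lemmas.
Variable R : realType.
Local Open Scope ereal_scope.

Lemma elog_le_ln (x : \bar R) (B : R) : (0 < B)%R -> x <= B%:E -> elog x <= (ln B)%:E.
Proof.
move=> B0; case: x => [r| |] //=; rewrite ?leNye // lee_fin => rB.
by case: ifP => r0; rewrite ?leNye // lee_fin ler_ln // posrE.
Qed.

Lemma elog_lt_expR (x : \bar R) (c : R) : elog x < c%:E -> x < (expR c)%:E.
Proof.
case: x => [r| |] //= => [|_]; last exact: ltNyr.
rewrite lte_fin; case: ifP => r0 h; last by rewrite (le_lt_trans _ (expR_gt0 c)) // leNgt r0.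
by rewrite -[r]lnK ?posrE // ltr_expR -lte_fin.
Qed.

Lemma le_of_forall_EFin_gt (x y : \bar R) :
  (forall a : R, y < a%:E -> x <= a%:E) -> x <= y.
Proof.
case: y => [r| |] xa.
- by apply/lee_addgt0Pr => e e0; apply: xa; rewrite lte_fin ltrDl.
- by rewrite leey.
- have := xa (fine x - 1)%R (ltNyr _).
  by case: x {xa} => [r| |] //=; rewrite lee_fin => ?; exfalso; lra.
Qed.

Lemma lte_EFin_between (x : \bar R) (a : R) : x < a%:E -> exists2 b : R, x < b%:E & (b < a)%R.
Proof.
case: x => [r| |] // => [|_]; last by exists (a - 1)%R; rewrite ?ltNyr //; lra.
by rewrite lte_fin => ra; exists ((r + a) / 2)%R; rewrite ?lte_fin; lra.
Qed.

End ereal_lemmas.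

Section limf_esup_lemmas.
Context {T : choiceType} {X : filteredType T} {R : realType}.
Context (F : set_system X) {FF : Filter F}.
Implicit Types (f g : X -> \bar R).
Local Open Scope ereal_scope.

Lemma limf_esup_le f a : (\forall x \near F, f x <= a) -> limf_esup f F <= a.
Proof.
move=> Fa; apply: le_trans (ereal_inf_lbound _) _; first by exists [set x | f x <= a].
by apply: ge_ereal_sup => _ [x fx <-].
Qed.

Lemma limf_esup_lt f a : limf_esup f F < a -> \forall x \near F, f x < a.
Proof.
move=> /ereal_inf_lt [_ [V FV <-]] Va; apply: filterS FV => x Vx.
by apply: le_lt_trans Va; apply: ereal_sup_ubound; exists x.
Qed.

Lemma le_limf_esup f g : (\forall x \near F, f x <= g x) ->
  limf_esup f F <= limf_esup g F.
Proof.
move=> fg; apply: le_of_forall_EFin_gt => a /limf_esup_lt ga.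
by apply: limf_esup_le; apply: filterS2 fg ga => x fgx /ltW; exact: le_trans.
Qed.

End limf_esup_lemmas.

Section real_limsups.
Variable R : realType.
Implicit Types f g : R -> \bar R.

Lemma near_at_right0_div (c : R) (P : R -> Prop) : 0 < c ->
  (\forall e \near 0^'+, P e) -> \forall e \near 0^'+, P (e / c).
Proof.
move=> c0 /nbhs_ballP [d d0 dP]; apply/nbhs_ballP.
exists (d * c) => [|e /= de e0]; first exact: mulr_gt0.
apply: dP; last exact: divr_gt0.
move: de; rewrite -!ball_normE /= !sub0r !normrN normrM !gtr0_norm ?invr_gt0 //.
by rewrite ltr_pdivrMr.
Qed.

Local Open Scope ereal_scope.

Lemma growth_rate_le f (C lam : R) :
  (\forall t \near pinfty_nbhs R, f t <= (expR (C + lam * t))%:E) ->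
  limf_esup (fun t : R => t^-1%:E * elog (f t)) (pinfty_nbhs R) <= lam%:E.
Proof.
move=> fC; apply/lee_addgt0Pr => eta eta0; apply: limf_esup_le.
near=> t.
have t0 : (0 < t)%R by near: t; exact: nbhs_pinfty_gt.
have Ct : (C <= eta * t)%R by rewrite -ler_pdivrMl //; near: t; exact: nbhs_pinfty_ge.
rewrite lee_pdivrMl // -EFinM.
apply: le_trans (elog_le_ln (expR_gt0 (C + lam * t)) _) _; first by near: t; exact: fC.
by rewrite expRK lee_fin mulrDr; lra.
Unshelve. all: by end_near. Qed.

(* [mdimM phi] and [mdimB phi Z] are the [limsup_log_scaled] of [r_rate phi] and
   [M_crit phi Z]. *)
Definition limsup_log_scaled f : \bar R :=
  limf_esup (fun eps => f eps * ((ln eps^-1)^-1)%:E) 0^'+.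

Lemma le_limsup_log_scaled f g : (forall e, (0 < e < 1)%R -> f e <= g e) ->
  limsup_log_scaled f <= limsup_log_scaled g.
Proof.
move=> fg; apply: le_limf_esup; near=> e.
have e01 : (0 < e < 1)%R.
  by apply/andP; split; near: e; [exact: nbhs_right_gt|exact: nbhs_right_lt].
apply: lee_wpmul2r; last exact: fg.
by case/andP: e01 => e0 e1; rewrite lee_fin invr_ge0 ln_ge0 // invf_ge1 // ltW.
Unshelve. all: by end_near. Qed.

Lemma limsup_log_scaled_dilate f g (c : R) : (1 <= c)%R ->
  (forall e, (0 < e)%R -> f e <= g (e / c)%R) ->
  limsup_log_scaled f <= limsup_log_scaled g.
Proof.
move=> c1 fg; have c0 : (0 < c)%R by apply: lt_le_trans c1.
apply: le_of_forall_EFin_gt => a /limf_esup_lt /(near_at_right0_div c0) ga.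
apply/lee_addgt0Pr => eta eta0; apply: limf_esup_le; near=> e.
have e0 : (0 < e)%R by near: e; exact: nbhs_right_gt.
have e1 : (e < 1)%R by near: e; exact: nbhs_right_lt.
set w := ln e^-1.
have w0 : (0 < w)%R by rewrite ln_gt0 // invf_gt1.
have lnc : (0 <= ln c)%R by rewrite ln_ge0.
have wa : (ln c * `|a| <= eta * w)%R.
  rewrite -ler_pdivrMl // /w lnV ?posrE // lerNr -ler_expR lnK ?posrE //.
  by apply: ltW; near: e; apply: nbhs_right_lt; exact: expR_gt0.
have lnce : ln (e / c)^-1 = (ln c + w)%R by rewrite invf_div lnM ?posrE ?invr_gt0.
have ge : g (e / c)%R * ((ln (e / c)^-1)^-1)%:E < a%:E by near: e; exact: ga.
have u0 : (0 < ln c + w)%R by lra.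
rewrite lnce lte_pdivrMr // in ge.
rewrite lee_pdivrMr //; apply: le_trans (fg _ e0) _; apply: le_trans (ltW ge) _.
have : (a * ln c <= `|a| * ln c)%R by rewrite ler_wpM2r // ler_norm.
rewrite -EFinM lee_fin; nra.
Unshelve. all: by end_near. Qed.

End real_limsups.

Section bowen_metric.
Variables (R : realType) (X : metricType R) (phi : X -> R -> X).

Lemma d_sym (x y : X) : d x y = d y x.
Proof. exact: metric_sym. Qed.

Lemma compact_mdist_bounded (x0 : X) :
  compact [set: X] -> exists D, forall y, d x0 y <= D.
Proof.
rewrite compact_near_coveringP.
move=> /(_ R +oo%R (fun D y => d x0 y < D) _) [x _|M [_ HM]].
  near=> y D; apply: le_lt_trans (metric_triangle x0 x y : d _ _ <= d _ _ + d _ _) _.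
  have : d x y < 1.
    by near: y; apply: filterS (nbhsx_ballx x _ ltr01) => y; rewrite ballEmdist.
  have : d x0 x + 1 < D by near: D; exact: nbhs_pinfty_gt (num_real _).
  rewrite /=; lra.
by exists (M + 1) => y; apply/ltW/(HM (M + 1)); rewrite ?ltrDl.
Unshelve. all: by end_near. Qed.

Lemma dt_le t x y c : 0 <= c ->
  (forall s, 0 <= s <= t -> d (phi x s) (phi y s) <= c) -> dt phi t x y <= c.
Proof.
move=> c0 xyc; rewrite /dt.
have [->|/set0P Sne] := eqVneq [set d (phi x s) (phi y s) | s in `[0, t]] set0.
  by rewrite sup0.
by apply: ge_sup => // _ [s st <-]; apply: xyc; rewrite /= in_itv in st.
Qed.

Lemma dt_sym t x y : dt phi t x y = dt phi t y x.
Proof. by rewrite /dt; congr sup; apply: eq_imagel => s _; exact: d_sym. Qed.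

Hypothesis cX : compact [set: X].

Lemma mdist_le_dt t x y s : 0 <= s <= t -> d (phi x s) (phi y s) <= dt phi t x y.
Proof.
move=> st; have [D HD] := compact_mdist_bounded (phi x 0) cX.
apply: ub_le_sup; last by exists s => //; rewrite /= in_itv.
exists (D + D) => _ [u _ <-]; apply: le_trans (metric_triangle _ (phi x 0) _) _.
by rewrite metric_sym; apply: lerD; apply: HD.
Qed.

Lemma dt_ge0 t x y : 0 <= t -> 0 <= dt phi t x y.
Proof.
move=> t0; apply: le_trans (mdist_ge0 (phi x 0) (phi y 0)) (mdist_le_dt _ _ _).
by rewrite lexx.
Qed.

Lemma le_dt t t' x y : 0 <= t <= t' -> dt phi t x y <= dt phi t' x y.
Proof.
case/andP=> t0 tt'; apply: dt_le => [|s /andP [s0 st]]; first exact: dt_ge0 (le_trans t0 tt').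
by apply: mdist_le_dt; rewrite s0 (le_trans st).
Qed.

Lemma le_r_t t t' eps : 0 <= t <= t' -> (r_t phi t eps <= r_t phi t' eps)%E.
Proof.
move=> tt'; apply/ereal_inf_le_tmp/image_subset => E spanE x.
by have [y yE xy] := spanE x; exists y => //; apply: le_lt_trans xy; exact: le_dt.
Qed.

Hypothesis phi_cont : continuous (fun p : X * R => phi p.1 p.2).

Lemma near_orbit_segment (y0 : X) (a b e : R) : 0 < e ->
  \forall y \near y0, forall s, a <= s <= b -> d (phi y0 s) (phi y s) < e.
Proof.
move=> e0; have := @segment_compact R a b; rewrite compact_near_coveringP.
move=> /(_ X (nbhs y0) (fun y s => d (phi y0 s) (phi y s) < e) _) cover.
apply: filterS (cover _) => [y ys s sab|s _]; first by apply: ys; rewrite /= in_itv.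
have /metricType_numDomainType.cvgr_dist_lt /(_ _ (divr_gt0 e0 (ltr0Sn _ 1))) :=
  @phi_cont (y0, s).
case=> [[U V] [/= Uy0 Vs] UV].
exists (V, U) => // -[s' y] [/= Vs' Uy].
have h1 : d (phi y0 s') (phi y0 s) < e / 2.
  by rewrite d_sym; exact: UV (y0, s') (conj (nbhs_singleton Uy0) Vs').
have h2 : d (phi y0 s) (phi y s') < e / 2 by exact: UV (y, s') (conj Uy Vs').
apply: le_lt_trans (metric_triangle _ (phi y0 s) _) _.
by rewrite (splitr e); exact: ltrD.
Qed.

Lemma bowen_ball_open (n : nat) x eps : open (bowen_ball phi n%:R x eps).
Proof.
rewrite openE => y0 /= xy0; set g := dt phi n%:R x y0 in xy0.
have e0 : 0 < (eps - g) / 2 by rewrite divr_gt0 // subr_gt0.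
apply: filterS (near_orbit_segment y0 0 n%:R e0) => y y0y.
have g0 : 0 <= g by exact: dt_ge0.
apply: (@le_lt_trans _ _ (g + (eps - g) / 2)); last lra.
apply: dt_le => [|s sn]; first lra.
apply: le_trans (metric_triangle _ (phi y0 s) _) _.
by apply: lerD; [exact: mdist_le_dt|exact: ltW (y0y s sn)].
Qed.

End bowen_metric.

Section itineraries.
Variables (len : nat -> nat) (s : seq nat).

(* [fuel] only bounds the recursion: since lengths are positive, any [fuel > T]
   suffices, here and in [itinerary]. *)
Fixpoint itineraries (fuel T : nat) : seq (seq nat) :=
  if fuel is fuel'.+1 then
    flatten [seq if (T <= len i)%N then [:: [:: i]]
                 else [seq i :: w | w <- itineraries fuel' (T - len i)] | i <- s]
  else [::].

Lemma size_itineraries (R : realType) (lam L : R) fuel T :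
  \sum_(i <- s) expR (- ((len i)%:R * lam)) <= 1 ->
  (forall i, i \in s -> (len i)%:R <= L) ->
  (size (itineraries fuel T))%:R <= expR (`|lam| * L + lam * T%:R).
Proof.
move=> sum1 lenL; elim: fuel T => [|fuel IH] T /=; first exact: ltW (expR_gt0 _).
rewrite size_flatten sumnE /shape -map_comp big_map natr_sum.
apply: le_trans (_ : \sum_(i <- s) expR (`|lam| * L + lam * T%:R) *
                       expR (- ((len i)%:R * lam)) <= _); last first.
  by rewrite -mulr_sumr ler_piMr // ltW // expR_gt0.
rewrite big_seq [leRHS]big_seq; apply: ler_sum => i si /=; rewrite -expRD.
case: ifP => [Tlen|/negbT]; last first.
  rewrite -ltnNge => /ltnW lenT; rewrite size_map; apply: le_trans (IH _) _.
  by rewrite ler_expR natrB //; lra.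
rewrite -[leLHS]expR0 ler_expR.
have := ler_norm lam; have := normr_ge0 lam; have := lenL _ si.
have : (T%:R <= (len i)%:R :> R) by rewrite ler_nat.
have : (0 <= T%:R :> R) by [].
nra.
Qed.

End itineraries.

Section itinerary.
Variables (R : realType) (X : metricType R) (phi : X -> R -> X).
Variables (idx : X -> nat) (len : nat -> nat).

Fixpoint itinerary (fuel T : nat) (x : X) : seq nat :=
  if fuel is fuel'.+1 then
    if (T <= len (idx x))%N then [:: idx x]
    else idx x :: itinerary fuel' (T - len (idx x)) (phi x (len (idx x))%:R)
  else [::].

Hypothesis len_gt0 : forall x, (0 < len (idx x))%N.

Lemma itinerary_mem s fuel T x : (forall x, idx x \in s) -> (T < fuel)%N ->
  itinerary fuel T x \in itineraries len s fuel T.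
Proof.
move=> idx_s; elim: fuel T x => [//|fuel IH] T x /= Tfuel.
apply/flatten_mapP; exists (idx x) => //.
case: ifPn => [_|]; first by rewrite mem_seq1.
rewrite -ltnNge => lenT; rewrite map_f // IH //.
by have := len_gt0 x; lia.
Qed.

Variable c : R.
Hypothesis flowD : forall x t u, phi x (t + u) = phi (phi x u) t.
Hypothesis idx_close : forall x y, idx x = idx y ->
  forall u, 0 <= u <= (len (idx x))%:R -> d (phi x u) (phi y u) <= c.

Lemma itinerary_close fuel T x y : (T < fuel)%N ->
  itinerary fuel T x = itinerary fuel T y ->
  forall u, 0 <= u <= T%:R -> d (phi x u) (phi y u) <= c.
Proof.
elim: fuel T x y => [//|fuel IH] T x y Tfuel /= xy u /andP [u0 uT].
have idxy : idx x = idx y by move: xy; do 2 case: ifP => _; case.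
move: xy; rewrite -idxy; case: ifPn => [lenT _|]; [|rewrite -ltnNge => lenT [] xy].
  by apply: idx_close => //; rewrite u0 (le_trans uT) // ler_nat.
have [ulen|lenu] := lerP u (len (idx x))%:R; first by apply: idx_close; rewrite ?u0.
have -> : u = u - (len (idx x))%:R + (len (idx x))%:R by rewrite subrK.
rewrite (flowD x) (flowD y).
apply: (IH (T - len (idx x))%N) => //; first by have := len_gt0 x; lia.
by rewrite subr_ge0 (ltW lenu) natrB ?lerB // ltnW.
Qed.

End itinerary.

Section spanning_sets.
Variables (R : realType) (X : metricType R) (phi : X -> R -> X).

Lemma itinerary_spanning (idx : X -> nat) (len : nat -> nat) s (c eps : R) T :
  0 <= c -> c < eps -> (forall x, idx x \in s) -> (forall x, 0 < len (idx x))%N ->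
  (forall x t u, phi x (t + u) = phi (phi x u) t) ->
  (forall x y, idx x = idx y ->
     forall u, 0 <= u <= (len (idx x))%:R -> d (phi x u) (phi y u) <= c) ->
  exists2 E : {fset X}, spanning phi T%:R eps E &
    (#|` E| <= size (itineraries len s T.+1 T))%N.
Proof.
move=> c0 ceps idx_s len_gt0 flowD idx_close.
have [[x0 _]|X0] := pselect (exists x : X, True); last first.
  by exists fset0 => // x; case: X0; exists x.
pose itin := itinerary phi idx len T.+1 T.
pose rep w := xget x0 [set x | itin x = w].
exists [fset x in [seq rep w | w <- itineraries len s T.+1 T]]%fset; last first.
  by rewrite card_fseq -(size_map rep) size_undup.
move=> x; exists (rep (itin x)).
  by rewrite inE map_f // itinerary_mem.
have itin_rep : itin (rep (itin x)) = itin x.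
  exact: (@xgetI _ x0 [set z | itin z = itin x] x erefl).
apply: le_lt_trans ceps; apply: dt_le => // u.
exact: (itinerary_close len_gt0 flowD idx_close (ltnSn T) (esym itin_rep)).
Qed.

Hypothesis cX : compact [set: X].

Lemma r_rate_le_of_nat_bound eps (C lam : R) :
  (forall T : nat, (r_t phi T%:R eps <= (expR (C + lam * T%:R))%:E)%E) ->
  (r_rate phi eps <= lam%:E)%E.
Proof.
move=> rT; apply: (@growth_rate_le _ _ (C + `|lam|)); near=> t.
have t0 : 0 <= t by near: t; exact: nbhs_pinfty_ge (num_real 0).
pose T := (Num.truncn t).+1.
have tT : t <= T%:R by exact/ltW/truncnS_gt.
have Tt : T%:R <= t + 1 by rewrite /T -addn1 natrD lerD2r truncn_le.
apply: le_trans (le_r_t phi cX eps (_ : 0 <= t <= T%:R)) _; first by rewrite t0.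
apply: le_trans (rT T) _; rewrite lee_fin ler_expR.
have := ler_norm lam; have := normr_ge0 lam; nra.
Unshelve. all: by end_near. Qed.

End spanning_sets.

Section bowen_covers.
Variables (R : realType) (X : metricType R) (phi : X -> R -> X).
Implicit Types (f : nat -> option (X * nat)) (Z : set X).

Definition bowen_piece eps f i : set X :=
  if f i is Some (x, n) then bowen_ball phi n%:R x eps else set0.

Definition bowen_time f i : nat := if f i is Some (_, n) then n else 0.

Lemma bowen_weight_ge0 lam f i : (0 <= bowen_weight lam f i)%E.
Proof. by rewrite /bowen_weight; case: (f i) => [[x n]|] //; rewrite lee_fin expR_ge0. Qed.

Lemma bowen_piece_time Z N eps f i x : bowen_cover phi Z N eps f ->
  bowen_piece eps f i x -> (N <= bowen_time f i)%N.
Proof.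
case=> fN _; rewrite /bowen_piece /bowen_time.
by case E: (f i) => [[c n]|] // _; exact: fN E.
Qed.

Lemma le_M_N Z lam eps N N' :
  (N <= N')%N -> (M_N phi Z lam N eps <= M_N phi Z lam N' eps)%E.
Proof.
move=> NN'; apply/ereal_inf_le_tmp/image_subset => f [fN fZ].
by split=> // i x n /fN; exact: leq_trans.
Qed.

Lemma M_N_ge0 Z lam N eps : (0 <= M_N phi Z lam N eps)%E.
Proof.
apply: le_ereal_inf_tmp => _ [f _ <-].
by apply: nneseries_ge0 => i _ _; exact: bowen_weight_ge0.
Qed.

Lemma M_N_le_M_lam Z lam N eps : (M_N phi Z lam N eps <= M_lam phi Z lam eps)%E.
Proof.
rewrite /M_lam (cvg_lim _ (ereal_nondecreasing_cvgn _)) //.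
  by apply: ereal_sup_ubound; exists N.
by move=> m n; exact: le_M_N.
Qed.

Lemma M_lam_eq0_cover Z lam eps : M_lam phi Z lam eps = 0%E ->
  exists2 f, bowen_cover phi Z 1 eps f & (\sum_(i <oo) bowen_weight lam f i < 1)%E.
Proof.
move=> M0; have : (M_N phi Z lam 1 eps < 1)%E.
  by apply: le_lt_trans (M_N_le_M_lam _ _ _ _) _; rewrite M0 lte01.
by move=> /ereal_inf_lt [_ [f fcov <-]]; exists f.
Qed.

Lemma bowen_weight_partial_sum lam f N :
  (\sum_(i <oo) bowen_weight lam f i <= 1)%E ->
  \sum_(i <- [seq i <- iota 0 N | f i]) expR (- ((bowen_time f i)%:R * lam)) <= 1.
Proof.
move=> wsum; rewrite -lee_fin -sumEFin; apply: le_trans wsum.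
apply: le_trans (nneseries_lim_ge N (fun i _ _ => bowen_weight_ge0 lam f i)).
rewrite big_filter big_mkcond /= /index_iota subn0.
by apply: lee_sum => i _; rewrite /bowen_weight /bowen_time; case: (f i) => [[]|].
Qed.

Hypothesis cX : compact [set: X].

Lemma bowen_piece_close eps f i x y u :
  bowen_piece eps f i x -> bowen_piece eps f i y ->
  0 <= u <= (bowen_time f i)%:R -> d (phi x u) (phi y u) <= 2 * eps.
Proof.
rewrite /bowen_piece /bowen_time; case: (f i) => [[c n]|] // cx cy un.
apply: le_trans (metric_triangle _ (phi c u) _) _; rewrite mulr2n mulrDl mul1r.
apply: lerD; apply/ltW; last exact: le_lt_trans (mdist_le_dt _ cX _ _ un) cy.
by rewrite metric_sym; exact: le_lt_trans (mdist_le_dt _ cX _ _ un) cx.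
Qed.

Hypothesis phi_cont : continuous (fun p : X * R => phi p.1 p.2).

Lemma bowen_piece_open eps f i : open (bowen_piece eps f i).
Proof.
by rewrite /bowen_piece; case: (f i) => [[x n]|]; [exact: bowen_ball_open|exact: open0].
Qed.

Lemma compact_bowen_subcover eps f :
  [set: X] `<=` \bigcup_(i in [set: nat]) bowen_piece eps f i ->
  exists N, forall x, exists2 i, (i < N)%N & bowen_piece eps f i x.
Proof.
move=> fcov; move: cX; rewrite compact_near_coveringP.
move=> /(_ nat \oo (fun N x => exists2 i, (i < N)%N & bowen_piece eps f i x) _) [x _|].
  have [i _ pix] := fcov x I.
  have piece_nbhs : nbhs x (bowen_piece eps f i).
    exact: open_nbhs_nbhs (conj (bowen_piece_open eps f i) pix).
  near=> y N => /=; exists i; first by near: N; exact: nbhs_infty_gt.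
  by near: y.
by move=> M _ HM; exists M => x; exact: (HM M (leqnn M) x I).
Unshelve. all: by end_near. Qed.

End bowen_covers.

Section spanning_to_bowen.
Variables (R : realType) (X : metricType R) (phi : X -> R -> X).
Implicit Types (Z : set X) (E : {fset X}).

Definition spanning_cover E (n : nat) (i : nat) : option (X * nat) :=
  omap (pair^~ n) (onth E i).

Lemma spanning_cover_bowen Z E n N eps : spanning phi n%:R eps E -> (N <= n)%N ->
  bowen_cover phi Z N eps (spanning_cover E n).
Proof.
move=> spanE Nn; split=> [i x m|x _].
  by rewrite /spanning_cover; case: onth => // y [_ <-].
have [y yE xy] := spanE x; exists (index y E) => //.
rewrite /spanning_cover onthE (nth_map y) ?index_mem // nth_index //=.
by rewrite /bowen_ball /= dt_sym.
Qed.

Lemma spanning_cover_weight_sum lam E n :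
  (\sum_(i <oo) bowen_weight lam (spanning_cover E n) i =
   (#|` E|%:R * expR (- (n%:R * lam)))%:E)%E.
Proof.
rewrite (@nneseries_split _ _ 0 #|` E|) ?add0n; last by move=> k _; exact: bowen_weight_ge0.
rewrite eseries0 ?adde0; last by move=> i Ei _; rewrite /bowen_weight /spanning_cover onth_default.
rewrite (eq_big_nat _ _ (F2 := fun=> (expR (- (n%:R * lam)))%:E)); last first.
  move=> i /andP [_ iE]; move: (onthTE E i); rewrite iE.
  by rewrite /bowen_weight /spanning_cover; case: onth.
by rewrite sumEFin sumr_const_nat subn0 [in RHS]mulr_natl.
Qed.

Lemma M_lam_eq0_of_r_rate_lt Z eps (b a : R) :
  (r_rate phi eps < b%:E)%E -> b < a -> M_lam phi Z a eps = 0%E.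
Proof.
move=> /limf_esup_lt rb ba.
suff M_N0 N : M_N phi Z a N eps = 0%E.
  by rewrite /M_lam (_ : (fun N => _) = fun=> 0%E) ?lim_cst //; apply: funext.
apply/eqP; rewrite eq_le M_N_ge0 andbT; apply/lee_addgt0Pr => del del0; rewrite add0e.
near \oo => n.
have n0 : 0 < n%:R :> R by rewrite ltr0n; near: n; exact: nbhs_infty_gt.
have : (n%:R^-1%:E * elog (r_t phi n%:R eps) < b%:E)%E by near: n; exact: cvgr_idn rb.
rewrite lte_pdivrMl // -EFinM => /elog_lt_expR /ereal_inf_lt [_ [E spanE <-]].
rewrite lte_fin => cardE.
have Nn : (N <= n)%N by near: n; exact: nbhs_infty_ge.
apply: le_trans (ereal_inf_lbound _) _.
  by exists (spanning_cover E n) => //; exact: spanning_cover_bowen.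
rewrite spanning_cover_weight_sum lee_fin.
apply: le_trans (_ : expR (n%:R * b) * expR (- (n%:R * a)) <= _).
  by rewrite ler_wpM2r ?expR_ge0 // ltW.
rewrite -expRD -[leRHS]lnK ?posrE // ler_expR.
have : - ln del / (a - b) <= n%:R by near: n; exact: nbhs_infty_ger.
rewrite ler_pdivrMr ?subr_gt0 //; nra.
Unshelve. all: by end_near. Qed.

Lemma M_crit_le_r_rate Z eps : (M_crit phi Z eps <= r_rate phi eps)%E.
Proof.
apply: le_of_forall_EFin_gt => a /lte_EFin_between [b rb ba].
by apply: ereal_inf_lbound; exists a => //; exact: M_lam_eq0_of_r_rate_lt rb ba.
Qed.

End spanning_to_bowen.

Section bowen_to_spanning.
Variables (R : realType) (X : metricType R) (phi : X -> R -> X).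
Hypotheses (cX : compact [set: X]) (phi_flow : is_flow phi).

Lemma r_rate_le_of_bowen_cover eps lam f : 0 < eps ->
  bowen_cover phi [set: X] 1 eps f -> (\sum_(i <oo) bowen_weight lam f i <= 1)%E ->
  (r_rate phi (3 * eps) <= lam%:E)%E.
Proof.
case: phi_flow => phi_cont _ flowD eps0 fcov wsum.
have [N fN] := compact_bowen_subcover cX phi_cont fcov.2.
have [idx idxP] : {idx : X -> nat &
    forall x, (idx x < N)%N /\ bowen_piece phi eps f (idx x) x}.
  apply: (@choice _ _ (fun x i => (i < N)%N /\ bowen_piece phi eps f i x)) => x.
  by have [i] := fN x; exists i.
pose s := [seq i <- iota 0 N | f i].
pose L : R := (\max_(i < N) bowen_time f i)%:R.
apply: (@r_rate_le_of_nat_bound _ _ _ cX _ (`|lam| * L)) => T.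
have [||x|x|//|x y idxy u|E spanE cardE] :=
  @itinerary_spanning _ _ phi idx (bowen_time f) s (2 * eps) (3 * eps) T.
- by rewrite mulr_ge0 // ltW.
- by rewrite ltr_pM2r // ltr_nat.
- case: (idxP x) => xN; rewrite mem_filter mem_iota xN /bowen_piece.
  by case: (f (idx x)).
- exact: bowen_piece_time fcov (idxP x).2.
- by apply: bowen_piece_close => //; [exact: (idxP x).2|rewrite idxy; exact: (idxP y).2].
apply: le_trans (ereal_inf_lbound _) _; first by exists E.
have lenL i : i \in s -> (bowen_time f i)%:R <= L.
  rewrite mem_filter mem_iota /= => /andP [_ iN].
  by rewrite ler_nat; exact: (leq_bigmax (Ordinal iN)).
have := size_itineraries T.+1 T (bowen_weight_partial_sum N wsum) lenL.
by rewrite lee_fin; apply: le_trans; rewrite ler_nat.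
Qed.

Lemma r_rate_le_M_crit eps : 0 < eps ->
  (r_rate phi (3 * eps) <= M_crit phi [set: X] eps)%E.
Proof.
move=> eps0; apply: le_of_forall_EFin_gt => a /ereal_inf_lt [_ [lam M0 <-]].
rewrite lte_fin => lama; have [f fcov /ltW wsum] := M_lam_eq0_cover M0.
by apply: le_trans (r_rate_le_of_bowen_cover eps0 fcov wsum) _; rewrite lee_fin ltW.
Qed.

End bowen_to_spanning.

Theorem proposition2p12 (R : realType) (X : metricType R) (phi : X -> R -> X) :
  compact [set: X] -> is_flow phi -> mdimM phi = mdimB phi [set: X].
Proof.
move=> cX phi_flow; apply/eqP; rewrite eq_le; apply/andP; split.
- apply: (@limsup_log_scaled_dilate _ _ _ 3) => [|e e0]; first by rewrite ler1n.
  have e3 : 0 < e / 3 by rewrite divr_gt0.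
  by have := r_rate_le_M_crit cX phi_flow e3; rewrite mulrC divfK.
- by apply: le_limsup_log_scaled => e _; exact: M_crit_le_r_rate.
Qed.
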